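(* Let $q\in[0,1)$ and let $\mathfrak M$ be an $N$-dimensional space of $\mathbb C^n$-valued functions analytic in a neighbourhood of the origin which is invariant under $R_q$. Let $F$ be a $\mathbb C^{n\times N}$-valued function whose columns form a basis of $\mathfrak M$, and put $C=F(0)\in\mathbb C^{n\times N}$. Then there exists a matrix $A_q\in\mathbb C^{N\times N}$ such that, for $z$ in a neighbourhood of the origin, \[ F(z)=C\prod_{j=0}^\infty \bigl(I_N-(1-q)zq^jA_q\bigr)^{-1}. \]
   Context: For $q\in(0,1)$, $R_q$ is the $q$-Jackson derivative $(R_qf)(z)=\frac{f(z)-f(qz)}{(1-q)z}$ (extended at $z=0$ by continuity); for $q=0$, $R_0$ is the backward shift $(R_0f)(z)=\frac{f(z)-f(0)}{z}$ for $z\neq0$, $(R_0f)(0)=f'(0)$. The operator acts entrywise on vector/matrix-valued functions. Convention $q^0=1$ (so for $q=0$ the product reduces to $(I_N-zA_q)^{-1}$). All factors of the product commute. *)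

(* Complex numbers are [R[i]] (the
   complex field over a real closed field from mathcomp-real-closed),
   with [R : realType] so that [R[i]] is complete. *)
From HB Require Import structures.
From mathcomp Require Import all_boot all_order all_algebra.
From mathcomp Require Import all_classical all_reals all_analysis.
From mathcomp Require Export complex.
Export numFieldNormedType.Exports.

Set Implicit Arguments.
Unset Strict Implicit.
Unset Printing Implicit Defensive.

Import Order.TTheory GRing.Theory Num.Theory.
Local Open Scope ring_scope.
Local Open Scope complex_scope.
Local Open Scope classical_set_scope.

(* Equip R[i] with its (norm-induced) topology / normed structure as a
   numFieldType, exactly as the library does for abstract numFieldTypes. *)
HB.instance Definition _ (R : rcfType) := NormedModule.copy R[i] R[i]^o.

Section Defs.
Variable R : realType.
Local Notation C := R[i].

Definition analytic0 (f : C -> C) : Prop :=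
  exists r : R, 0 < r /\
    exists a : nat -> C, forall z : C, `|z| < r%:C ->
      (fun m : nat => \sum_(k < m) a k * z ^+ k) @ \oo --> f z.

Definition mx_analytic0 (a b : nat) (f : C -> 'M[C]_(a, b)) : Prop :=
  forall i j, analytic0 (fun z => f z i j).

(* The operator R_q, acting entrywise on matrix-valued functions:
   for z <> 0, (R_q f)(z) = (f(z) - f(qz)) / ((1-q) z); at z = 0 it is
   extended by continuity, i.e. it is the limit of this quotient as z -> 0
   (for q = 0 this limit is, by definition, f'(0)). *)
Definition Rq (q : R) (a b : nat) (f : C -> 'M[C]_(a, b)) (z : C) : 'M[C]_(a, b) :=
  let g := fun w : C => ((1 - q%:C) * w)^-1 *: (f w - f (q%:C * w)) in
  if z == 0 then lim (g @ (0 : C)^') else g z.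

Fixpoint qprod (q : R) (N : nat) (A : 'M[C]_N) (z : C) (m : nat) : 'M[C]_N :=
  match m with
  | 0 => 1%:M
  | m'.+1 => qprod q A z m' *m invmx (1%:M - ((1 - q%:C) * z * q%:C ^+ m') *: A)
  end.

End Defs.

(* Invariance under R_q means R_q F = F A_q for a matrix A_q; for z <> 0 this is
   the functional equation F(z) (I - (1-q) z A_q) = F(qz).  For small z every
   factor I - (1-q) z q^j A_q is invertible, so iterating gives
   F(z) = F(q^m z) P_m(z) with P_m the partial products.  An entrywise l^1
   estimate shows that the P_m(z) stay bounded and form a Cauchy sequence at
   rate q^m, while analyticity makes F Lipschitz at 0; letting m -> oo yields
   F(z) = F(0) P(z). *)

From HB Require Import structures.
From mathcomp Require Import all_boot all_order all_algebra.
From mathcomp Require Import all_classical all_reals all_analysis.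
From mathcomp Require Import complex ring lra.
Import Order.TTheory GRing.Theory Num.Theory.
Import numFieldNormedType.Exports.
Import Normc.
Local Open Scope ring_scope.
Local Open Scope complex_scope.
Local Open Scope classical_set_scope.
Set Implicit Arguments.
Unset Strict Implicit.
Unset Printing Implicit Defensive.

Section ComplexModulus.
Variable R : realType.
Local Notation C := R[i].
Implicit Types (x y w : C) (r : R).

Lemma norm_normc x : `|x| = (normc x)%:C.
Proof. by case: x. Qed.

Lemma normc_ge0 x : 0 <= normc x.
Proof. by case: x => a b; exact: sqrtr_ge0. Qed.

Lemma normc_real r : normc r%:C = `|r|.
Proof. by rewrite /normc /= expr0n /= addr0 sqrtr_sqr. Qed.

Lemma normcX x k : normc (x ^+ k) = normc x ^+ k.
Proof. by elim: k => [|k IH]; rewrite ?normc1 // !exprS normcM IH. Qed.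

Lemma normc_sum (I : Type) (s : seq I) (P : pred I) (f : I -> C) :
  normc (\sum_(i <- s | P i) f i) <= \sum_(i <- s | P i) normc (f i).
Proof.
elim/big_rec2: _ => [|i y x _ h]; first by rewrite normc0.
by apply: le_trans (le_normcD _ _) _; rewrite lerD2l.
Qed.

Lemma normc_Re_le x : `|complex.Re x| <= normc x.
Proof. by case: x => a b; rewrite /normc -sqrtr_sqr ler_wsqrtr // lerDl sqr_ge0. Qed.

Lemma normc_Im_le x : `|complex.Im x| <= normc x.
Proof. by case: x => a b; rewrite /normc -sqrtr_sqr ler_wsqrtr // lerDr sqr_ge0. Qed.

Lemma normc_le_ReIm x : normc x <= `|complex.Re x| + `|complex.Im x|.
Proof.
case: x => a b; rewrite /normc /=.
have hab : 0 <= `|a| + `|b| by rewrite addr_ge0.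
rewrite -(ger0_norm hab) -sqrtr_sqr ler_wsqrtr //.
rewrite sqrrD -[a ^+ 2]real_normK ?num_real // -[b ^+ 2]real_normK ?num_real //.
by rewrite -addrA lerD2l lerDr mulrn_wge0 // mulr_ge0.
Qed.

Lemma ReB x y : complex.Re (x - y) = complex.Re x - complex.Re y.
Proof. by case: x; case: y. Qed.

Lemma ImB x y : complex.Im (x - y) = complex.Im x - complex.Im y.
Proof. by case: x; case: y. Qed.

Lemma nbhs0_normcP (P : C -> Prop) :
  (\forall w \near (0 : C), P w) <-> exists2 d : R, 0 < d & forall w, normc w < d -> P w.
Proof.
split=> [|[d d0 hd]].
  move/nbhs_ballP => [[a b] /=]; rewrite ltcE /= => /andP[/eqP -> a0] he.
  exists a => // w hw; apply: he.
  by rewrite /ball /= norm_normc complexr0 ltcR sub0r normcN.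
apply/nbhs_ballP; exists d%:C; first by rewrite /= ltcR.
by move=> w; rewrite /ball /= norm_normc ltcR sub0r normcN; exact: hd.
Qed.

Lemma near0_normcM_le (c e : R) : 0 < e -> \forall w \near (0 : C), normc w * c <= e.
Proof.
move=> e0; apply/nbhs0_normcP.
have c1 : 0 < `|c| + 1 by rewrite ltr_wpDl.
exists (e / (`|c| + 1)) => [|w]; first by rewrite divr_gt0.
rewrite ltr_pdivlMr // => hw; apply: ltW; apply: le_lt_trans hw.
by rewrite ler_wpM2l ?normc_ge0 // (le_trans (ler_norm c)) // lerDl.
Qed.

Lemma cvg_normc_lt (u : nat -> C) l e : 0 < e -> u @ \oo --> l ->
  exists M, forall m, (M <= m)%N -> normc (l - u m) < e.
Proof.
move=> e0 hu.
have e0' : (0 : C) < e%:C by rewrite ltcR.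
have [M _ hM] := @cvgr_dist_lt _ _ _ _ _ u l hu _ e0'.
by exists M => m Mm; have := hM m Mm; rewrite norm_normc ltcR.
Qed.

End ComplexModulus.

Section L1Norm.
Variable R : realType.
Local Notation C := R[i].

Definition l1norm m n (X : 'M[C]_(m, n)) : R := \sum_i \sum_j normc (X i j).

Variables m n : nat.
Implicit Types X Y : 'M[C]_(m, n).

Lemma l1norm_ge0 X : 0 <= l1norm X.
Proof. by do 2![apply: sumr_ge0 => ? _]; exact: normc_ge0. Qed.

Lemma normc_entry_le_l1norm X i j : normc (X i j) <= l1norm X.
Proof.
rewrite /l1norm (bigD1 i) //= (bigD1 j) //= -addrA lerDl addr_ge0 //.
  by apply: sumr_ge0 => k _; exact: normc_ge0.
by do 2![apply: sumr_ge0 => ? _]; exact: normc_ge0.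
Qed.

Lemma ler_l1normD X Y : l1norm (X + Y) <= l1norm X + l1norm Y.
Proof.
rewrite /l1norm -big_split /=; apply: ler_sum => i _.
by rewrite -big_split /=; apply: ler_sum => j _; rewrite mxE le_normcD.
Qed.

Lemma l1norm0 : l1norm (0 : 'M[C]_(m, n)) = 0.
Proof. by rewrite /l1norm big1 // => i _; rewrite big1 // => j _; rewrite mxE normc0. Qed.

Lemma l1normN X : l1norm (- X) = l1norm X.
Proof. by apply: eq_bigr => i _; apply: eq_bigr => j _; rewrite mxE normcN. Qed.

Lemma l1normBC X Y : l1norm (X - Y) = l1norm (Y - X).
Proof. by rewrite -l1normN opprB. Qed.

Lemma l1normZ (c : C) X : l1norm (c *: X) = normc c * l1norm X.
Proof.
rewrite /l1norm mulr_sumr; apply: eq_bigr => i _; rewrite mulr_sumr.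
by apply: eq_bigr => j _; rewrite mxE normcM.
Qed.

Lemma l1norm_le0_eq0 X : l1norm X <= 0 -> X = 0.
Proof.
move=> h; apply/matrixP => i j; rewrite mxE; apply: eq0_normc.
by apply/eqP; rewrite eq_le normc_ge0 andbT (le_trans (normc_entry_le_l1norm X i j)).
Qed.

Lemma ler_l1normM p (X : 'M[C]_(m, n)) (Y : 'M[C]_(n, p)) :
  l1norm (X *m Y) <= l1norm X * l1norm Y.
Proof.
rewrite [l1norm X * _]mulr_suml; apply: ler_sum => i _; rewrite mulr_suml.
apply: (@le_trans _ _ (\sum_l \sum_j normc (X i j) * normc (Y j l))).
  apply: ler_sum => l _; rewrite mxE (le_trans (normc_sum _ _ _)) //.
  by apply: ler_sum => j _; rewrite normcM.
rewrite exchange_big /=; apply: ler_sum => j _; rewrite -mulr_sumr ler_wpM2l ?normc_ge0 //.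
rewrite [leRHS](bigD1 j) //= lerDl.
by do 2![apply: sumr_ge0 => ? _]; exact: normc_ge0.
Qed.

End L1Norm.

Lemma l1norm1 (R : realType) n : l1norm (1%:M : 'M[R[i]]_n) = n%:R.
Proof.
rewrite /l1norm (eq_bigr (fun _ => 1)) ?sumr_const ?card_ord // => i _.
rewrite (bigD1 i) //= big1 => [|j /negbTE ji]; last by rewrite mxE eq_sym ji normc0.
by rewrite mxE eqxx addr0 normc1.
Qed.

Section SquareMatrices.
Variables (R : realType) (N : nat).
Local Notation C := R[i].
Implicit Types X Y B : 'M[C]_N.

(* The kernel K of 1 - tB satisfies K = t K B, so |K| <= |t| |B| |K| forces K = 0. *)
Lemma unitmx_1BZ (t : C) B : normc t * l1norm B < 1 -> 1%:M - t *: B \in unitmx.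
Proof.
move=> h; set M := 1%:M - t *: B.
have hK : kermx M = t *: (kermx M *m B).
  have /eqP := mulmx_ker M.
  by rewrite /M mulmxBr mulmx1 -scalemxAr subr_eq0 => /eqP.
have K0 : kermx M = 0.
  apply: l1norm_le0_eq0.
  have h1 : l1norm (kermx M) <= normc t * (l1norm (kermx M) * l1norm B).
    by rewrite {1}hK l1normZ ler_wpM2l ?normc_ge0 // ler_l1normM.
  have := l1norm_ge0 (kermx M); have := l1norm_ge0 B; have := normc_ge0 t.
  nra.
by rewrite -row_free_unit -kermx_eq0 K0.
Qed.

Lemma comm_mx_invmx X Y : comm_mx X Y -> comm_mx (invmx X) Y.
Proof.
move=> h; case: (boolP (X \in unitmx)) => hX; last by rewrite /comm_mx invmx_out.
by apply: (canRL (mulmxK hX)); rewrite -mulmxA -h mulmxA (mulVmx hX) mul1mx.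
Qed.

Lemma comm_mx_1BZ X Y (t : C) : comm_mx X Y -> comm_mx X (1%:M - t *: Y).
Proof.
move=> h; apply: comm_mxB; first exact: comm_mx1.
by rewrite /comm_mx -scalemxAl -scalemxAr h.
Qed.

End SquareMatrices.

Section GeometricRate.
Variable R : realType.
Implicit Types (q D E : R).

Lemma geometric_cauchy_lim (u : nat -> R) D q : 0 <= q ->
  (forall m k, (m <= k)%N -> `|u k - u m| <= D * q ^+ m) ->
  exists a, forall m, `|a - u m| <= D * q ^+ m.
Proof.
move=> q0 hu.
have D0 : 0 <= D by have := hu 0%N 0%N (leqnn 0); rewrite subrr normr0 expr0 mulr1.
pose E := [set u k - D * q ^+ k | k in [set: nat]].
have ub m : ubound E (u m + D * q ^+ m).
  move=> _ [k _ <-].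
  have Dk : 0 <= D * q ^+ k by rewrite mulr_ge0 // exprn_ge0.
  have Dm : 0 <= D * q ^+ m by rewrite mulr_ge0 // exprn_ge0.
  case: (leqP m k) => [mk|/ltnW km].
    by have := hu _ _ mk; rewrite ler_norml => /andP[_ h]; lra.
  by have := hu _ _ km; rewrite ler_norml => /andP[h _]; lra.
have E0 : E !=set0 by exists (u 0%N - D * q ^+ 0), 0%N.
have hs : has_sup E by split => //; exists (u 0%N + D * q ^+ 0); exact: ub.
exists (sup E) => m; rewrite ler_norml; apply/andP; split.
  have : u m - D * q ^+ m <= sup E by apply: sup_upper_bound => //; exists m.
  lra.
by have := ge_sup E0 (ub m); lra.
Qed.

Lemma geometric_lt q E e : 0 <= q -> q < 1 -> 0 < e ->
  exists M, forall m, (M <= m)%N -> E * q ^+ m < e.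
Proof.
move=> q0 q1 e0.
have E1 : 0 < `|E| + 1 by rewrite ltr_wpDl.
have q1' : `|q| < 1 by rewrite ger0_norm.
have [M _ hM] := @cvgr_dist_lt _ _ _ _ _ (fun m => q ^+ m) 0
  (cvg_expr q1') _ (divr_gt0 e0 E1).
exists M => m /hM /=; rewrite sub0r normrN ger0_norm ?exprn_ge0 // ltr_pdivlMr // => h.
apply: le_lt_trans h; rewrite mulrC ler_wpM2l ?exprn_ge0 //.
by rewrite (le_trans (ler_norm E)) // lerDl.
Qed.

Lemma le0_geometric x E q : 0 <= q -> q < 1 -> (forall m, x <= E * q ^+ m) -> x <= 0.
Proof.
move=> q0 q1 h; rewrite leNgt; apply/negP => x0.
have [M hM] := geometric_lt E q0 q1 x0.
by have := hM M (leqnn M); have := h M; lra.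
Qed.

End GeometricRate.

Section GeometricRateMatrix.
Variable R : realType.
Local Notation C := R[i].
Implicit Types (q D E : R).

Lemma geometric_cauchy_limC (u : nat -> C) D q : 0 <= q ->
  (forall m k, (m <= k)%N -> normc (u k - u m) <= D * q ^+ m) ->
  exists l, forall m, normc (l - u m) <= 2 * D * q ^+ m.
Proof.
move=> q0 hu.
have [a ha] : exists a, forall m, `|a - complex.Re (u m)| <= D * q ^+ m.
  apply: (@geometric_cauchy_lim _ (fun k => complex.Re (u k)) D q q0) => m k mk.
  by rewrite -ReB (le_trans (normc_Re_le _)) ?hu.
have [b hb] : exists b, forall m, `|b - complex.Im (u m)| <= D * q ^+ m.
  apply: (@geometric_cauchy_lim _ (fun k => complex.Im (u k)) D q q0) => m k mk.
  by rewrite -ImB (le_trans (normc_Im_le _)) ?hu.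
exists (a +i* b) => m; apply: le_trans (normc_le_ReIm _) _.
by rewrite ReB ImB /=; have := ha m; have := hb m; lra.
Qed.

Lemma geometric_cauchy_limmx m n (Q : nat -> 'M[C]_(m, n)) D q : 0 <= q ->
  (forall a k, (a <= k)%N -> l1norm (Q k - Q a) <= D * q ^+ a) ->
  exists P, forall a, l1norm (P - Q a) <= (m * n)%:R * (2 * D) * q ^+ a.
Proof.
move=> q0 hQ.
have entry_lim (ij : 'I_m * 'I_n) :
    exists l, forall a, normc (l - Q a ij.1 ij.2) <= 2 * D * q ^+ a.
  case: ij => i j; apply: (@geometric_cauchy_limC (fun a => Q a i j) D q q0) => a k ak.
  apply: le_trans (hQ a k ak).
  by have := normc_entry_le_l1norm (Q k - Q a) i j; rewrite !mxE.
have [f hf] := choice entry_lim.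
exists (\matrix_(i, j) f (i, j)) => a.
apply: (@le_trans _ _ (\sum_(i < m) \sum_(j < n) (2 * D * q ^+ a))).
  by do 2![apply: ler_sum => ? _]; rewrite !mxE; exact: (hf (_, _)).
by rewrite !sumr_const !card_ord -mulrnA -[leRHS]mulrA [leRHS]mulr_natl mulnC.
Qed.

Lemma cvg_l1norm_geometric m n (Q : nat -> 'M[C]_(m, n)) P E q : 0 <= q -> q < 1 ->
  (forall a, l1norm (P - Q a) <= E * q ^+ a) -> Q @ \oo --> P.
Proof.
move=> q0 q1 hQ; apply/cvg_ballP => -[a b]; rewrite ltcE /= => /andP[/eqP -> a0].
have [M hM] := geometric_lt E q0 q1 a0.
exists M => // t Mt; split=> [|i j]; first by rewrite complexr0 ltcR.
rewrite /ball /= norm_normc -[a +i* 0]/(a%:C) ltcR; apply: le_lt_trans (hM t Mt).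
apply: le_trans (hQ t).
by have := normc_entry_le_l1norm (P - Q t) i j; rewrite !mxE.
Qed.

Lemma l1norm_geometric_eq0 m n (X : 'M[C]_(m, n)) E q : 0 <= q -> q < 1 ->
  (forall a, l1norm X <= E * q ^+ a) -> X = 0.
Proof. by move=> q0 q1 h; apply: l1norm_le0_eq0 (le0_geometric q0 q1 h). Qed.

End GeometricRateMatrix.

Section PowerSeriesLipschitz.
Variables (R : realType) (f : R[i] -> R[i]) (a : nat -> R[i]) (r : R).
Hypothesis r_gt0 : 0 < r.
Hypothesis hf : forall w, `|w| < r%:C ->
  (fun m => \sum_(k < m) a k * w ^+ k) @ \oo --> f w.

Local Notation S w m := (\sum_(k < m) a k * w ^+ k).
Local Notation rho := (r / 2).

Let rho_gt0 : 0 < rho.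
Proof. by rewrite divr_gt0. Qed.

Let rho_lt_r : rho < r.
Proof. by have := r_gt0; lra. Qed.

Let half_rho_lt_r : rho / 2 < r.
Proof. by have := r_gt0; lra. Qed.

Lemma partial_sumSB w m : S w m.+1 - S w m = a m * w ^+ m.
Proof. by rewrite big_ord_recr /= addrAC subrr add0r. Qed.

Lemma power_series_coef_bound :
  exists2 B, 0 <= B & forall m, normc (a m) * rho ^+ m <= B.
Proof.
have rho_lt : `|rho%:C| < r%:C.
  by rewrite norm_normc normc_real ltcR ger0_norm ?(ltW rho_gt0) ?rho_lt_r.
have [M hM] := cvg_normc_lt (ltr01 : (0 : R) < 1) (hf rho_lt).
pose T k := normc (a k) * rho ^+ k.
have T_ge0 k : 0 <= T k by rewrite mulr_ge0 ?normc_ge0 ?exprn_ge0 ?(ltW rho_gt0).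
have sumT_ge0 : 0 <= \sum_(k < M) T k by rewrite sumr_ge0.
exists (2 + \sum_(k < M) T k) => [|m]; first by rewrite addr_ge0.
have [mM|Mm] := ltnP m M.
  by rewrite (bigD1 (Ordinal mM)) //= [leRHS]addrCA lerDl addr_ge0 ?sumr_ge0.
have -> : normc (a m) * rho ^+ m = normc ((f rho%:C - S rho%:C m) - (f rho%:C - S rho%:C m.+1)).
  have -> : (f rho%:C - S rho%:C m) - (f rho%:C - S rho%:C m.+1) = S rho%:C m.+1 - S rho%:C m.
    by rewrite opprB [LHS]addrC addrA subrK.
  by rewrite partial_sumSB normcM normcX normc_real ger0_norm ?(ltW rho_gt0).
apply: le_trans (le_normcD _ _) _; rewrite normcN.
by have := hM m Mm; have := hM m.+1 (leqW Mm); lra.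
Qed.

Lemma partial_sum_bound B w : 0 <= B -> (forall m, normc (a m) * rho ^+ m <= B) ->
  normc w <= rho / 2 -> forall m,
  normc (S w m.+1 - a 0%N) <= 2 * B * (normc w / rho) - 2 * B * (normc w / rho) ^+ m.+1.
Proof.
move=> B0 hB hw; set t := normc w / rho.
have t0 : 0 <= t by rewrite divr_ge0 ?normc_ge0 ?(ltW rho_gt0).
have t_le : t <= 1 / 2 by rewrite ler_pdivrMr //; have := rho_gt0; lra.
elim=> [|m IH]; first by rewrite big_ord1 expr0 mulr1 subrr normc0 expr1 subrr.
have -> : S w m.+2 - a 0%N = (S w m.+1 - a 0%N) + a m.+1 * w ^+ m.+1.
  by rewrite -partial_sumSB; ring.
apply: le_trans (le_normcD _ _) _.
have hterm : normc (a m.+1 * w ^+ m.+1) <= B * t ^+ m.+1.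
  have ew : normc w = t * rho by rewrite /t divfK ?gt_eqF.
  by rewrite normcM normcX ew exprMn mulrCA mulrC ler_wpM2r ?exprn_ge0.
have : 0 <= B * t ^+ m.+1 by rewrite mulr_ge0 ?exprn_ge0.
rewrite [t ^+ m.+2]exprS; nra.
Qed.

Lemma power_series_lipschitz0 :
  exists K, \forall w \near (0 : R[i]), normc (f w - f 0) <= K * normc w.
Proof.
have [B B0 hB] := power_series_coef_bound.
have hlim w : normc w <= rho / 2 -> normc (f w - a 0%N) <= 2 * B / rho * normc w.
  move=> hw; have hwr : `|w| < r%:C.
    by rewrite norm_normc ltcR; exact: le_lt_trans hw half_rho_lt_r.
  apply/ler_addgt0Pr => e e0; have [M hM] := cvg_normc_lt e0 (hf hwr).
  have := le_normcD (f w - S w M.+1) (S w M.+1 - a 0%N); rewrite addrA subrK.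
  have := hM M.+1 (leqnSn M); have := partial_sum_bound B0 hB hw M.
  have t0 : 0 <= normc w / rho by rewrite divr_ge0 ?normc_ge0 ?(ltW rho_gt0).
  have : 0 <= 2 * B * (normc w / rho) ^+ M.+1 by rewrite !mulr_ge0 ?exprn_ge0.
  have -> : 2 * B / rho * normc w = 2 * B * (normc w / rho) by rewrite mulrAC -!mulrA.
  lra.
have f0 : f 0 = a 0%N.
  apply/eqP; rewrite -subr_eq0; apply/eqP/eq0_normc/eqP.
  rewrite eq_le normc_ge0 andbT; have := hlim 0; rewrite normc0 mulr0; apply.
  by rewrite divr_ge0 ?(ltW rho_gt0).
exists (2 * B / rho); apply/nbhs0_normcP; exists (rho / 2) => [|w /ltW hw].
  by rewrite divr_gt0.
by rewrite f0; exact: hlim.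
Qed.

End PowerSeriesLipschitz.

Lemma analytic0_lipschitz (R : realType) (f : R[i] -> R[i]) : analytic0 f ->
  exists K, \forall w \near (0 : R[i]), normc (f w - f 0) <= K * normc w.
Proof. by move=> [r [r0 [a ha]]]; exact: (power_series_lipschitz0 r0 ha). Qed.

Lemma mx_analytic0_lipschitz (R : realType) m n (F : R[i] -> 'M[R[i]]_(m, n)) :
  mx_analytic0 F ->
  exists K, \forall w \near (0 : R[i]), l1norm (F w - F 0) <= K * normc w.
Proof.
move=> hF; have [K hK] := choice (fun ij : 'I_m * 'I_n => analytic0_lipschitz (hF ij.1 ij.2)).
exists (\sum_ij K ij).
apply: filterS (@filter_forall _ _ _ _ (nbhs_filter (0 : R[i])) hK) => w hw.
rewrite /l1norm mulr_suml pair_big /=; apply: ler_sum => -[i j] _.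
by rewrite !mxE; exact: (hw (i, j)).
Qed.

Section RqInvariance.
Variables (R : realType) (n N : nat) (q : R) (F : R[i] -> 'M[R[i]]_(n, N)).
Hypothesis hq1 : q != 1.

Lemma Rq_funeq (A : 'M[R[i]]_N) z :
  (forall j, Rq q (fun x => F x *m delta_mx j 0) z = F z *m col j A) ->
  F z *m (1%:M - ((1 - q%:C) * z) *: A) = F (q%:C * z).
Proof.
move=> hcol; have [->|z0] := eqVneq z 0; first by rewrite !mulr0 scale0r subr0 mulmx1.
have c0 : (1 - q%:C) * z != 0.
  by rewrite mulf_neq0 // subr_eq0 eq_sym -[1]/(1%:C) (inj_eq (@complexI _)).
apply/matrixP => i j; rewrite mulmxBr mulmx1 -scalemxAr !mxE.
have := congr1 (fun M : 'M[R[i]]_(n, 1) => M i 0) (hcol j).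
rewrite /Rq (negbTE z0) /= (colE j A) mulmxA -!colE !mxE => <-.
by rewrite mulVKf //; ring.
Qed.

Lemma Rq_invariant_funeq :
  (forall v : 'cV[R[i]]_N, exists w : 'cV[R[i]]_N,
     \forall z \near (0 : R[i]), Rq q (fun x => F x *m v) z = F z *m w) ->
  exists A : 'M[R[i]]_N,
    \forall z \near (0 : R[i]), F z *m (1%:M - ((1 - q%:C) * z) *: A) = F (q%:C * z).
Proof.
move=> hinv; have [W hW] := choice (fun j : 'I_N => hinv (delta_mx j 0)).
exists (\matrix_(i, j) W j i 0).
have hcol j : col j (\matrix_(i, j) W j i 0) = W j.
  by apply/matrixP => i l; rewrite !mxE (ord1 l).
apply: filterS (@filter_forall _ _ _ _ (nbhs_filter (0 : R[i])) hW) => z hz.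
by apply: Rq_funeq => j; rewrite hcol.
Qed.

End RqInvariance.

Section QProduct.
Variables (R : realType) (N : nat) (q : R) (A : 'M[R[i]]_N) (z : R[i]).
Hypotheses (hq0 : 0 <= q) (hq1 : q < 1) (hzA : normc z * l1norm A <= 1 / 2).

Local Notation P := (qprod q A z).
Local Notation c j := ((1 - q%:C) * z * q%:C ^+ j).
Let s := normc z * l1norm A.

Let s_ge0 : 0 <= s.
Proof. by rewrite mulr_ge0 ?normc_ge0 ?l1norm_ge0. Qed.

Let qX_ge0 j : 0 <= q ^+ j.
Proof. exact: exprn_ge0. Qed.

Let qX_le1 j : q ^+ j <= 1.
Proof. by rewrite exprn_ile1 // ltW. Qed.

Let qcoef_ge0 j : 0 <= (1 - q) * q ^+ j.
Proof. by rewrite mulr_ge0 ?subr_ge0 ?(ltW hq1). Qed.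

Let qcoef_le1 j : (1 - q) * q ^+ j <= 1.
Proof. by apply: le_trans (qX_le1 j); rewrite ler_piMl // lerBlDr lerDl. Qed.

Lemma normc_qcoefM_l1norm j : normc (c j) * l1norm A = (1 - q) * q ^+ j * s.
Proof.
have -> : 1 - q%:C = (1 - q)%:C by rewrite rmorphB rmorph1.
rewrite !normcM normcX !normc_real !ger0_norm ?subr_ge0 ?(ltW hq1) //.
by rewrite /s; ring.
Qed.

Lemma qfactor_unitmx j : 1%:M - c j *: A \in unitmx.
Proof.
apply: unitmx_1BZ; rewrite normc_qcoefM_l1norm.
by rewrite (le_lt_trans (ler_piMl s_ge0 (qcoef_le1 j))) // (le_lt_trans hzA) //; lra.
Qed.

Lemma qprodSE m : P m.+1 = P m + c m *: (P m.+1 *m A).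
Proof.
have h : P m.+1 *m (1%:M - c m *: A) = P m by rewrite /= mulmxKV ?qfactor_unitmx.
by rewrite -{1}h mulmxBr mulmx1 -scalemxAr subrK.
Qed.

Lemma l1norm_qprodSD m : l1norm (P m.+1 - P m) <= (1 - q) * q ^+ m * s * l1norm (P m.+1).
Proof.
rewrite {1}qprodSE addrC addKr l1normZ.
apply: le_trans (ler_wpM2l (normc_ge0 _) (ler_l1normM _ _)) _.
by rewrite mulrCA mulrC normc_qcoefM_l1norm.
Qed.

Lemma l1norm_qprod_invariant m : l1norm (P m) * (1 - s + s * q ^+ m) <= N%:R.
Proof.
elim: m => [|m IH]; first by rewrite expr0 mulr1 subrK mulr1 l1norm1.
set L := l1norm (P m) in IH *; set L' := l1norm (P m.+1).
set x := (1 - q) * q ^+ m * s; set sigma := 1 - s + s * q ^+ m in IH.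
have hL' : L' <= L + x * L'.
  have := ler_l1normD (P m) (P m.+1 - P m); rewrite addrC subrK.
  by move/le_trans; apply; rewrite lerD2l l1norm_qprodSD.
have -> : 1 - s + s * q ^+ m.+1 = sigma - x by rewrite /sigma /x exprS; ring.
have sqm_le : s * q ^+ m <= s by rewrite ler_piMr ?qX_le1.
have sqm_ge0 : 0 <= s * q ^+ m by rewrite mulr_ge0.
have sigma_ge0 : 0 <= sigma by rewrite /sigma; have := hzA; rewrite -/s; lra.
have xL'_ge0 : 0 <= x * L' by rewrite mulr_ge0 ?l1norm_ge0 // mulr_ge0.
have sigmaL : sigma * (L' - x * L') <= sigma * L by rewrite ler_wpM2l // lerBlDr.
have : sigma <= 1 by rewrite /sigma; lra.
nra.
Qed.

Lemma l1norm_qprod_le m : l1norm (P m) <= 2 * N%:R.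
Proof.
have := l1norm_qprod_invariant m; have := l1norm_ge0 (P m).
have : 0 <= s * q ^+ m by rewrite mulr_ge0.
have : 1 / 2 <= 1 - s by have := hzA; rewrite -/s; lra.
nra.
Qed.

Lemma l1norm_qprod_cauchy m p : (m <= p)%N ->
  l1norm (P p - P m) <= 2 * N%:R * s * (q ^+ m - q ^+ p).
Proof.
move/subnK <-; elim: (subn p m) => [|k IH]; first by rewrite add0n !subrr l1norm0 mulr0.
rewrite addSn; set j := addn k m in IH *.
have -> : P j.+1 - P m = (P j.+1 - P j) + (P j - P m) by rewrite addrA subrK.
apply: le_trans (ler_l1normD _ _) _.
have step : l1norm (P j.+1 - P j) <= (1 - q) * q ^+ j * s * (2 * N%:R).
  by apply: le_trans (l1norm_qprodSD j) _; rewrite ler_wpM2l ?l1norm_qprod_le // mulr_ge0.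
have -> : 2 * N%:R * s * (q ^+ m - q ^+ j.+1) =
  (1 - q) * q ^+ j * s * (2 * N%:R) + 2 * N%:R * s * (q ^+ m - q ^+ j).
  by rewrite exprS; ring.
exact: lerD.
Qed.

Lemma qprod_geometric_lim : exists Pz, forall m,
  l1norm (Pz - P m) <= (N * N)%:R * (2 * (2 * N%:R * s)) * q ^+ m.
Proof.
apply: geometric_cauchy_limmx hq0 _ => m p mp.
apply: le_trans (l1norm_qprod_cauchy mp) _.
by rewrite ler_wpM2l ?mulr_ge0 ?normc_ge0 ?l1norm_ge0 // lerBlDr lerDl.
Qed.

End QProduct.

Lemma comm_mx_qprod (R : realType) N q (A B : 'M[R[i]]_N) z m :
  comm_mx A B -> comm_mx (qprod q A z m) B.
Proof.
move=> hAB; elim: m => [|m IH] /=; first exact: comm1mx.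
apply/comm_mx_sym/comm_mxM; apply/comm_mx_sym => //.
exact/comm_mx_invmx/comm_mx_sym/comm_mx_1BZ.
Qed.

Section QIteration.
Variables (R : realType) (n N : nat) (q : R) (F : R[i] -> 'M[R[i]]_(n, N)).
Variables (A : 'M[R[i]]_N) (z : R[i]).
Hypotheses (hq0 : 0 <= q) (hq1 : q < 1) (hzA : normc z * l1norm A <= 1 / 2).
Local Notation w m := (q%:C ^+ m * z).
Hypothesis hfe :
  forall m, F (w m) *m (1%:M - ((1 - q%:C) * w m) *: A) = F (q%:C * w m).

Lemma qprod_iterate m : F z = F (w m) *m qprod q A z m.
Proof.
elim: m => [|m IH]; first by rewrite expr0 mul1r mulmx1.
set M := 1%:M - ((1 - q%:C) * z * q%:C ^+ m) *: A.
have hM : F (w m) *m M = F (w m.+1).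
  rewrite /M; have -> : (1 - q%:C) * z * q%:C ^+ m = (1 - q%:C) * w m by ring.
  by rewrite hfe exprS mulrA.
rewrite IH -[F (w m)](mulmxK (qfactor_unitmx hq0 hq1 hzA m)) hM /= -!mulmxA.
congr (_ *m _); apply/esym/comm_mx_qprod/comm_mx_sym/comm_mx_invmx/comm_mx_sym.
exact/comm_mx_1BZ/comm_mx_refl.
Qed.

Variable K : R.
Hypothesis hlip : forall m, l1norm (F (w m) - F 0) <= K * normc (w m).

Lemma qprod_cvg_representation :
  exists Pz, qprod q A z @ \oo --> Pz /\ F z = F 0 *m Pz.
Proof.
have [Pz] := qprod_geometric_lim hq0 hq1 hzA; set E := (N * N)%:R * _ => hPz.
exists Pz; split; first exact: cvg_l1norm_geometric hq0 hq1 hPz.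
apply/eqP; rewrite -subr_eq0; apply/eqP.
pose E' := K * normc z * (2 * N%:R) + l1norm (F 0) * E.
apply: (@l1norm_geometric_eq0 _ _ _ _ E' q hq0 hq1) => m.
have -> : F z - F 0 *m Pz =
    (F (w m) - F 0) *m qprod q A z m + F 0 *m (qprod q A z m - Pz).
  by rewrite {1}(qprod_iterate m) mulmxBl mulmxBr addrA subrK.
rewrite /E' mulrDl; apply: le_trans (ler_l1normD _ _) (lerD _ _).
- apply: le_trans (ler_l1normM _ _) _.
  have := hlip m; rewrite normcM normcX normc_real ger0_norm // => hFm.
  have -> : K * normc z * (2 * N%:R) * q ^+ m = K * (q ^+ m * normc z) * (2 * N%:R) by ring.
  by rewrite ler_pM ?l1norm_ge0 ?l1norm_qprod_le.
- apply: le_trans (ler_l1normM _ _) _.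
  by rewrite -mulrA ler_wpM2l ?l1norm_ge0 // l1normBC.
Qed.

End QIteration.

Unset Implicit Arguments.

Theorem proposition2p2 (R : realType) (n N : nat) (q : R)
    (hq0 : 0 <= q) (hq1 : q < 1)
    (F : R[i] -> 'M[R[i]]_(n, N))
    (hF_an : mx_analytic0 F)
    (hF_ind : forall v : 'cV[R[i]]_N,
        (\forall z \near (0 : R[i]), F z *m v = 0) -> v = 0)
    (hF_inv : forall v : 'cV[R[i]]_N, exists w : 'cV[R[i]]_N,
        \forall z \near (0 : R[i]), Rq q (fun x => F x *m v) z = F z *m w) :
  exists A : 'M[R[i]]_N,
    \forall z \near (0 : R[i]),
      exists P : 'M[R[i]]_N,
        (fun m : nat => qprod q A z m) @ \oo --> P /\ F z = F 0 *m P.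
Proof.
have [A hfe] := Rq_invariant_funeq (negbT (lt_eqF hq1)) hF_inv.
exists A.
have [K hK] := mx_analytic0_lipschitz hF_an.
have half_gt0 : (0 : R) < 1 / 2 by rewrite divr_gt0.
have [d d0 hd] := (nbhs0_normcP _).1
  (filterI hfe (filterI hK (near0_normcM_le (l1norm A) half_gt0))).
apply/nbhs0_normcP; exists d => // z hz.
have hw m : normc (q%:C ^+ m * z) < d.
  rewrite normcM normcX normc_real ger0_norm //; apply: le_lt_trans hz.
  by rewrite ler_piMl ?normc_ge0 // exprn_ile1 // ltW.
apply: (qprod_cvg_representation hq0 hq1 (hd z hz).2.2) => m.
  exact: (hd _ (hw m)).1.
exact: (hd _ (hw m)).2.1.
Qed.
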